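(* Let $\mathcal{P}_*$ be the nonempty powerset monad on $\mathbf{Sets}$, and let $\mathcal{K}\ell(\mathcal{P}_* )_{+1}$ be the category whose objects are sets and whose morphisms $X\to Y$ are functions $f\colon X\to\mathcal{P}_*(Y+1)$, with composition $(g\odot f)(x)=\bigcup_{y\in f(x)\cap Y} g(y)\,\cup\,\{*\mid *\in f(x)\}$ for $g\colon Y\to\mathcal{P}_*(Z+1)$. Define $\square\colon\mathcal{K}\ell(\mathcal{P}_* )_{+1}\to\mathbf{PoSets}^{\mathrm{op}}$ by $\square(X)=\mathcal{P}(X)$ (ordered by inclusion) and, for $f\colon X\to\mathcal{P}_*(Y+1)$ and $Q\subseteq Y$, $\square(f)(Q)=\{x\in X\mid \forall y\in Y.\ y\in f(x)\Rightarrow y\in Q\}$. Then the forgetful functor $U\colon\int\square\to\mathcal{K}\ell(\mathcal{P}_* )_{+1}$ has a left adjoint $0$ with $0(X)=(X,\emptyset)$ and a right adjoint $1$ with $1(X)=(X,X)$; moreover there is a functor (comprehension) $\int\square\to\mathcal{K}\ell(\mathcal{P}_* )_{+1}$ with $(X,P)\mapsto P$ which is right adjoint to $1$, and a functor (quotient) with $(X,P)\mapsto\neg P=X\setminus P$ which is left adjoint to $0$.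
   Context: $Y+1=Y\sqcup\{*\}$. For a functor $F\colon\mathcal{B}\to\mathbf{PoSets}^{\mathrm{op}}$, $\int F$ is the category with objects $(X,P)$, $P\in F(X)$, and morphisms $f\colon(X,P)\to(Y,Q)$ the morphisms $f\colon X\to Y$ of $\mathcal{B}$ with $P\le F(f)(Q)$; the forgetful functor sends $(X,P)\mapsto X$, $f\mapsto f$; $0$ and $1$ act as identity on morphisms. *)

(* Sets are Types, subsets are predicates [X -> Prop],
   Y+1 is [option Y] with [None] playing the role of the extra point [*]. *)
From Stdlib Require Import ProofIrrelevance.

Record Cat := {
  ob : Type;
  hom : ob -> ob -> Type;
  cid : forall a, hom a a;
  ccomp : forall a b c, hom b c -> hom a b -> hom a c
}.
Arguments cid {C} a : rename.
Arguments ccomp {C a b c} g f : rename.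

Record Functor (C D : Cat) := {
  fob : ob C -> ob D;
  fmap : forall a b, hom C a b -> hom D (fob a) (fob b);
  fmap_id : forall a, fmap a a (cid a) = cid (fob a);
  fmap_comp : forall a b c (g : hom C b c) (f : hom C a b),
      fmap a c (ccomp g f) = ccomp (fmap b c g) (fmap a b f)
}.
Arguments fob {C D} F a : rename.
Arguments fmap {C D} F {a b} f : rename.

Definition Adjunction {C D : Cat} (F : Functor C D) (G : Functor D C) : Prop :=
  exists (phi : forall c d, hom D (fob F c) d -> hom C c (fob G d))
         (psi : forall c d, hom C c (fob G d) -> hom D (fob F c) d),
    (forall c d f, psi c d (phi c d f) = f) /\
    (forall c d g, phi c d (psi c d g) = g) /\
    (forall c c' d d' (h : hom C c' c) (k : hom D d d') (f : hom D (fob F c) d),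
        phi c' d' (ccomp k (ccomp f (fmap F h))) = ccomp (fmap G k) (ccomp (phi c d f) h)).

(* A morphism X -> Y is f : X -> nonempty subsets of Y+1: a relation X -> option Y -> Prop
   such that every f(x) is nonempty. *)
Definition KlHom (X Y : Type) : Type :=
  { f : X -> option Y -> Prop | forall x, exists u, f x u }.

Definition kl_id (X : Type) : KlHom X X :=
  exist _ (fun x u => u = Some x) (fun x => ex_intro _ (Some x) eq_refl).

Definition kl_comp_rel {X Y Z : Type} (g : KlHom Y Z) (f : KlHom X Y) :
  X -> option Z -> Prop :=
  fun x w => (exists y, proj1_sig f x (Some y) /\ proj1_sig g y w)
             \/ (w = None /\ proj1_sig f x None).

Lemma kl_comp_ne {X Y Z : Type} (g : KlHom Y Z) (f : KlHom X Y) :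
  forall x, exists w, kl_comp_rel g f x w.
Proof.
  intro x. destruct (proj2_sig f x) as [[y|] H].
  - destruct (proj2_sig g y) as [w Hw]. exists w. left. eauto.
  - exists None. right. auto.
Qed.

Definition kl_comp {X Y Z : Type} (g : KlHom Y Z) (f : KlHom X Y) : KlHom X Z :=
  exist _ (kl_comp_rel g f) (kl_comp_ne g f).

Definition KlCat : Cat :=
  {| ob := Type; hom := KlHom; cid := kl_id; ccomp := @kl_comp |}.

Definition box {X Y : Type} (f : KlHom X Y) (Q : Y -> Prop) : X -> Prop :=
  fun x => forall y, proj1_sig f x (Some y) -> Q y.

Record IntOb := { carrier : Type; pred : carrier -> Prop }.

Definition IntHom (A B : IntOb) : Type :=
  { f : KlHom (carrier A) (carrier B) | forall x, pred A x -> box f (pred B) x }.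

Lemma int_id_ok (A : IntOb) : forall x, pred A x -> box (kl_id (carrier A)) (pred A) x.
Proof. intros x Hx y Hy. simpl in Hy. injection Hy as ->. exact Hx. Qed.

Definition int_id (A : IntOb) : IntHom A A := exist _ (kl_id (carrier A)) (int_id_ok A).

Lemma int_comp_ok {A B C : IntOb} (g : IntHom B C) (f : IntHom A B) :
  forall x, pred A x -> box (kl_comp (proj1_sig g) (proj1_sig f)) (pred C) x.
Proof.
  intros x Hx z [[y [Hfy Hgy]] | [Hn _]].
  - exact (proj2_sig g y (proj2_sig f x Hx y Hfy) z Hgy).
  - discriminate Hn.
Qed.

Definition int_comp {A B C : IntOb} (g : IntHom B C) (f : IntHom A B) : IntHom A C :=
  exist _ (kl_comp (proj1_sig g) (proj1_sig f)) (int_comp_ok g f).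

Definition IntCat : Cat :=
  {| ob := IntOb; hom := IntHom; cid := int_id; ccomp := @int_comp |}.

Definition UFun : Functor IntCat KlCat :=
  {| fob := fun A : ob IntCat => (carrier A : ob KlCat);
     fmap := fun A B (f : hom IntCat A B) => (proj1_sig f : hom KlCat (carrier A) (carrier B));
     fmap_id := fun _ => eq_refl;
     fmap_comp := fun _ _ _ _ _ => eq_refl |}.

Lemma int_hom_eq {A B : IntOb} (f g : IntHom A B) : proj1_sig f = proj1_sig g -> f = g.
Proof. intro H. apply eq_sig_hprop; [intros; apply proof_irrelevance | exact H]. Qed.

Definition zero_ob (X : ob KlCat) : ob IntCat := {| carrier := X; pred := fun _ => False |}.
Definition zero_map (X Y : ob KlCat) (f : hom KlCat X Y) : hom IntCat (zero_ob X) (zero_ob Y) :=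
  exist _ f (fun x (Hx : False) => False_rect _ Hx).
Definition ZeroFun : Functor KlCat IntCat :=
  {| fob := zero_ob; fmap := zero_map;
     fmap_id := fun X => int_hom_eq (zero_map X X (cid X)) (cid (zero_ob X)) eq_refl;
     fmap_comp := fun X Y Z g f => int_hom_eq (zero_map X Z (ccomp g f)) (ccomp (zero_map Y Z g) (zero_map X Y f)) eq_refl |}.

Definition one_ob (X : ob KlCat) : ob IntCat := {| carrier := X; pred := fun _ => True |}.
Definition one_map (X Y : ob KlCat) (f : hom KlCat X Y) : hom IntCat (one_ob X) (one_ob Y) :=
  exist _ f (fun x _ y _ => I).
Definition OneFun : Functor KlCat IntCat :=
  {| fob := one_ob; fmap := one_map;
     fmap_id := fun X => int_hom_eq (one_map X X (cid X)) (cid (one_ob X)) eq_refl;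
     fmap_comp := fun X Y Z g f => int_hom_eq (one_map X Z (ccomp g f)) (ccomp (one_map Y Z g) (one_map X Y f)) eq_refl |}.

(* For
   [0 -| U] and [U -| 1] the bijection is the identity, since [empty <= box f Q]
   and [P <= box f Y] hold for every Kleisli map [f].  A Kleisli map [X -> Y]
   whose proper outputs all lie in [Q] is the same as a Kleisli map [X -> Q]
   (corestriction), which gives [1 -| comprehension].  Dually, a map
   [(X, P) -> 0 Y] may send the points of [P] only to [*], so it is determined
   by its restriction to [X \ P], and every map out of [X \ P] extends by
   sending [P] to [*]; this gives [quotient -| 0], where the quotient of [f]
   replaces every output in [Q] by [*].  Separating [P] from [X \ P] uses
   excluded middle. *)
From Stdlib Require Import ProofIrrelevance FunctionalExtensionality
  PropExtensionality Classical.

Local Notation rel f := (proj1_sig f).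

Lemma sig_ext {T : Type} {P : T -> Prop} (a b : {x | P x}) :
  proj1_sig a = proj1_sig b -> a = b.
Proof. intro H. apply eq_sig_hprop; [intros; apply proof_irrelevance | exact H]. Qed.

Lemma kl_hom_ext {X Y : Type} (f g : KlHom X Y) :
  (forall x u, rel f x u <-> rel g x u) -> f = g.
Proof.
  intro H. apply sig_ext.
  apply functional_extensionality; intro x; apply functional_extensionality; intro u.
  apply propositional_extensionality, H.
Qed.

Lemma option_map_proj1_sig_inj {T : Type} {P : T -> Prop} (v w : option {x | P x}) :
  option_map (@proj1_sig _ _) v = option_map (@proj1_sig _ _) w -> v = w.
Proof.
  destruct v as [a|], w as [b|]; simpl; intro H; try discriminate; [|reflexivity].
  injection H as H. apply sig_ext in H. subst. reflexivity.
Qed.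

Lemma option_map_eq_None {S T : Type} (h : S -> T) (w : option S) :
  option_map h w = None <-> w = None.
Proof. destruct w; simpl; split; intro; congruence. Qed.

Lemma adjunction_intro {C D : Cat} (F : Functor C D) (G : Functor D C)
  (phi : forall c d, hom D (fob F c) d -> hom C c (fob G d))
  (psi : forall c d, hom C c (fob G d) -> hom D (fob F c) d) :
  (forall c d f, psi c d (phi c d f) = f) ->
  (forall c d g, phi c d (psi c d g) = g) ->
  (forall c c' d (h : hom C c' c) (f : hom D (fob F c) d),
      phi c' d (ccomp f (fmap F h)) = ccomp (phi c d f) h) ->
  (forall c d d' (k : hom D d d') (f : hom D (fob F c) d),
      phi c d' (ccomp k f) = ccomp (fmap G k) (phi c d f)) ->
  Adjunction F G.
Proof.
  intros psi_phi phi_psi natural_c natural_d.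
  exists phi, psi. split; [exact psi_phi | split; [exact phi_psi |]].
  intros c c' d d' h k f. rewrite natural_d, natural_c. reflexivity.
Qed.

Lemma zero_U_adjunction : Adjunction ZeroFun UFun.
Proof.
  apply (adjunction_intro ZeroFun UFun
           (fun c d (f : hom IntCat (fob ZeroFun c) d) => proj1_sig f)
           (fun c d g => exist _ g (fun x (Hx : False) => False_rect _ Hx)));
    intros; try apply int_hom_eq; reflexivity.
Qed.

Lemma U_one_adjunction : Adjunction UFun OneFun.
Proof.
  apply (adjunction_intro UFun OneFun
           (fun c d f => exist _ f (fun x _ y _ => I))
           (fun c d (g : hom IntCat c (fob OneFun d)) => proj1_sig g));
    intros; try apply int_hom_eq; reflexivity.
Qed.

Definition restrict {X Y : Type} (P : X -> Prop) (f : KlHom X Y) : KlHom {x | P x} Y :=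
  exist (fun r => forall x, exists u, r x u)
    (fun x => rel f (proj1_sig x)) (fun x => proj2_sig f (proj1_sig x)).

Lemma corestrict_ne {X Y : Type} {Q : Y -> Prop} (f : KlHom X Y) :
  (forall x, box f Q x) ->
  forall x, exists w : option {y | Q y}, rel f x (option_map (@proj1_sig _ _) w).
Proof.
  intros Hf x. destruct (proj2_sig f x) as [[y|] Hy].
  - exists (Some (exist _ y (Hf x y Hy))). exact Hy.
  - exists None. exact Hy.
Qed.

Definition corestrict {X Y : Type} {Q : Y -> Prop} (f : KlHom X Y)
    (Hf : forall x, box f Q x) : KlHom X {y | Q y} :=
  exist _ (fun x w => rel f x (option_map (@proj1_sig _ _) w)) (corestrict_ne f Hf).

Definition widen_rel {X Y : Type} {Q : Y -> Prop} (g : KlHom X {y | Q y}) :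
  X -> option Y -> Prop :=
  fun x u => exists w, rel g x w /\ option_map (@proj1_sig _ _) w = u.

Lemma widen_ne {X Y : Type} {Q : Y -> Prop} (g : KlHom X {y | Q y}) :
  forall x, exists u, widen_rel g x u.
Proof. intro x. destruct (proj2_sig g x) as [w Hw]. exists (option_map (@proj1_sig _ _) w), w. auto. Qed.

Definition widen {X Y : Type} {Q : Y -> Prop} (g : KlHom X {y | Q y}) : KlHom X Y :=
  exist _ (widen_rel g) (widen_ne g).

Lemma box_widen {X Y : Type} {Q : Y -> Prop} (g : KlHom X {y | Q y}) :
  forall x, box (widen g) Q x.
Proof. intros x y [[[y' q]|] [_ E]]; simpl in E; [injection E as <-; exact q | discriminate]. Qed.

Lemma widen_corestrict {X Y : Type} {Q : Y -> Prop} (f : KlHom X Y) (Hf : forall x, box f Q x) :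
  widen (corestrict f Hf) = f.
Proof.
  apply kl_hom_ext. intros x u. split.
  - intros [w [H <-]]. exact H.
  - intro H. destruct u as [y|].
    + exists (Some (exist _ y (Hf x y H))). auto.
    + exists None. auto.
Qed.

Lemma corestrict_widen {X Y : Type} {Q : Y -> Prop} (g : KlHom X {y | Q y})
    (H : forall x, box (widen g) Q x) :
  corestrict (widen g) H = g.
Proof.
  apply kl_hom_ext. intros x w. split.
  - intros [w' [Hw' E]]. apply option_map_proj1_sig_inj in E. subst. exact Hw'.
  - intro Hw. exists w. auto.
Qed.

Lemma corestrict_id {X : Type} {P : X -> Prop}
    (H : forall x, box (restrict P (kl_id X)) P x) :
  corestrict (restrict P (kl_id X)) H = kl_id {x | P x}.
Proof.
  apply kl_hom_ext. intros x w. simpl. split; intro E.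
  - apply option_map_proj1_sig_inj. exact E.
  - subst. reflexivity.
Qed.

Lemma corestrict_precomp {X Y Z : Type} {R : Z -> Prop} (g : KlHom Y Z) (f : KlHom X Y)
    (Hgf : forall x, box (kl_comp g f) R x) (Hg : forall y, box g R y) :
  corestrict (kl_comp g f) Hgf = kl_comp (corestrict g Hg) f.
Proof.
  apply kl_hom_ext. intros x w. simpl. unfold kl_comp_rel.
  rewrite option_map_eq_None. reflexivity.
Qed.

Lemma corestrict_comp {X Y Z : Type} {Q : Y -> Prop} {R : Z -> Prop}
    (g : KlHom Y Z) (f : KlHom X Y) (Hgf : forall x, box (kl_comp g f) R x)
    (Hg : forall y, box (restrict Q g) R y) (Hf : forall x, box f Q x) :
  corestrict (kl_comp g f) Hgf = kl_comp (corestrict (restrict Q g) Hg) (corestrict f Hf).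
Proof.
  apply kl_hom_ext. intros x w. simpl. unfold kl_comp_rel. simpl.
  rewrite option_map_eq_None. split.
  - intros [[y [Hy Hg']] | H]; [left | right; exact H].
    exists (exist _ y (Hf x y Hy)). auto.
  - intros [[y Hy] | H]; [left | right; exact H]. exists (proj1_sig y). exact Hy.
Qed.

Definition comprehension (A : IntOb) : Type := { x : carrier A | pred A x }.

Definition cmp_map (A B : IntOb) (f : IntHom A B) :
  KlHom (comprehension A) (comprehension B) :=
  corestrict (restrict (pred A) (proj1_sig f)) (fun x => proj2_sig f _ (proj2_sig x)).

Lemma cmp_map_id (A : IntOb) : cmp_map A A (int_id A) = kl_id (comprehension A).
Proof. apply corestrict_id. Qed.

Lemma cmp_map_comp (A B C : IntOb) (g : IntHom B C) (f : IntHom A B) :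
  cmp_map A C (int_comp g f) = kl_comp (cmp_map B C g) (cmp_map A B f).
Proof.
  etransitivity;
    [| exact (corestrict_comp (proj1_sig g) (restrict (pred A) (proj1_sig f))
                (fun x => int_comp_ok g f _ (proj2_sig x)) _ _)].
  apply kl_hom_ext. reflexivity.
Qed.

Definition CmpFun : Functor IntCat KlCat :=
  {| fob := (comprehension : ob IntCat -> ob KlCat); fmap := cmp_map;
     fmap_id := cmp_map_id; fmap_comp := cmp_map_comp |}.

Lemma one_cmp_adjunction : Adjunction OneFun CmpFun.
Proof.
  apply (adjunction_intro OneFun CmpFun
           (fun c d (f : hom IntCat (fob OneFun c) d) =>
              corestrict (proj1_sig f) (fun x => proj2_sig f x I))
           (fun c d (g : hom KlCat c (fob CmpFun d)) =>
              exist (fun k => forall x, True -> box k (pred d) x)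
                (widen g) (fun x _ => box_widen g x))).
  - intros c d f. apply int_hom_eq, widen_corestrict.
  - intros c d g. apply corestrict_widen.
  - intros c c' d h f. apply corestrict_precomp.
  - intros c d d' k f. apply corestrict_comp.
Qed.

Definition collapse_rel {X Y : Type} (Q : Y -> Prop) (f : KlHom X Y) :
  X -> option {y | ~ Q y} -> Prop :=
  fun x w => match w with
             | Some y => rel f x (Some (proj1_sig y))
             | None => rel f x None \/ exists y, Q y /\ rel f x (Some y)
             end.

Lemma collapse_ne {X Y : Type} (Q : Y -> Prop) (f : KlHom X Y) :
  forall x, exists w, collapse_rel Q f x w.
Proof.
  intro x. destruct (proj2_sig f x) as [[y|] Hy].
  - destruct (classic (Q y)) as [q | nq].
    + exists None. right. exists y. auto.
    + exists (Some (exist _ y nq)). exact Hy.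
  - exists None. left. exact Hy.
Qed.

Definition collapse {X Y : Type} (Q : Y -> Prop) (f : KlHom X Y) : KlHom X {y | ~ Q y} :=
  exist _ (collapse_rel Q f) (collapse_ne Q f).

Lemma collapse_None_of_box {X Y : Type} (Q : Y -> Prop) (f : KlHom X Y) (x : X) :
  box f Q x -> rel (collapse Q f) x None.
Proof.
  intro Hx. destruct (proj2_sig f x) as [[y|] Hy].
  - right. exists y. split; [exact (Hx y Hy) | exact Hy].
  - left. exact Hy.
Qed.

Lemma collapse_id {X : Type} (P : X -> Prop) :
  collapse P (restrict (fun x => ~ P x) (kl_id X)) = kl_id {x | ~ P x}.
Proof.
  apply kl_hom_ext. intros [x nx] [y|]; simpl.
  - split; intro E.
    + apply (option_map_proj1_sig_inj (Some _) (Some _)). exact E.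
    + injection E as ->. reflexivity.
  - split; [| discriminate].
    intros [E | [y [q E]]]; [discriminate |]. injection E as <-. contradiction.
Qed.

Lemma collapse_comp {X Y Z : Type} {Q : Y -> Prop} {R : Z -> Prop}
    (g : KlHom Y Z) (f : KlHom X Y) :
  (forall y, Q y -> box g R y) ->
  collapse R (kl_comp g f)
  = kl_comp (collapse R (restrict (fun y => ~ Q y) g)) (collapse Q f).
Proof.
  intro Hg. apply kl_hom_ext. intros x [z|].
  - simpl. unfold kl_comp_rel. simpl. split.
    + intros [[y [Hy Hz]] | [E _]]; [left | discriminate].
      assert (nq : ~ Q y) by (intro q; exact (proj2_sig z (Hg y q _ Hz))).
      exists (exist _ y nq). auto.
    + intros [[y Hy] | [E _]]; [left | discriminate]. exists (proj1_sig y). exact Hy.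
  - assert (to_right : forall y, rel f x (Some y) -> rel (collapse R g) y None ->
              rel (kl_comp (collapse R (restrict (fun y => ~ Q y) g)) (collapse Q f)) x None).
    { intros y Hy Hgy. destruct (classic (Q y)) as [q | nq].
      - right. split; [reflexivity |]. right. exists y. auto.
      - left. exists (exist _ y nq). auto. }
    assert (to_left : forall y, rel f x (Some y) -> rel (collapse R g) y None ->
              rel (collapse R (kl_comp g f)) x None).
    { intros y Hy [Hgy | [z [Rz Hgy]]].
      - left. left. exists y. auto.
      - right. exists z. split; [exact Rz |]. left. exists y. auto. }
    split.
    + intros [[[y [Hy Hgy]] | [_ Hx]] | [z [Rz [[y [Hy Hgy]] | [E _]]]]].
      * apply (to_right y Hy). left. exact Hgy.
      * right. split; [reflexivity |]. left. exact Hx.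
      * apply (to_right y Hy). right. exists z. auto.
      * discriminate.
    + intros [[y [Hy Hgy]] | [_ [Hx | [y [q Hy]]]]].
      * exact (to_left _ Hy Hgy).
      * left. right. auto.
      * exact (to_left y Hy (collapse_None_of_box R g y (Hg y q))).
Qed.

Definition quotient (A : IntOb) : Type := { x : carrier A | ~ pred A x }.

Definition quo_map (A B : IntOb) (f : IntHom A B) : KlHom (quotient A) (quotient B) :=
  collapse (pred B) (restrict (fun x => ~ pred A x) (proj1_sig f)).

Lemma quo_map_id (A : IntOb) : quo_map A A (int_id A) = kl_id (quotient A).
Proof. apply collapse_id. Qed.

Lemma quo_map_comp (A B C : IntOb) (g : IntHom B C) (f : IntHom A B) :
  quo_map A C (int_comp g f) = kl_comp (quo_map B C g) (quo_map A B f).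
Proof.
  etransitivity;
    [| exact (collapse_comp (proj1_sig g) (restrict (fun x => ~ pred A x) (proj1_sig f))
                (proj2_sig g))].
  apply kl_hom_ext. reflexivity.
Qed.

Definition QuoFun : Functor IntCat KlCat :=
  {| fob := (quotient : ob IntCat -> ob KlCat); fmap := quo_map;
     fmap_id := quo_map_id; fmap_comp := quo_map_comp |}.

Definition extend_rel {X Y : Type} (P : X -> Prop) (f : KlHom {x | ~ P x} Y) :
  X -> option Y -> Prop :=
  fun x u => (P x /\ u = None) \/ exists nx : ~ P x, rel f (exist _ x nx) u.

Lemma extend_ne {X Y : Type} (P : X -> Prop) (f : KlHom {x | ~ P x} Y) :
  forall x, exists u, extend_rel P f x u.
Proof.
  intro x. destruct (classic (P x)) as [p | nx].
  - exists None. left. auto.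
  - destruct (proj2_sig f (exist _ x nx)) as [u Hu]. exists u. right. exists nx. exact Hu.
Qed.

Definition extend {X Y : Type} (P : X -> Prop) (f : KlHom {x | ~ P x} Y) : KlHom X Y :=
  exist _ (extend_rel P f) (extend_ne P f).

Lemma box_extend {X Y : Type} (P : X -> Prop) (f : KlHom {x | ~ P x} Y) (x : X) :
  P x -> box (extend P f) (fun _ => False) x.
Proof. intros p y [[_ E] | [nx _]]; [discriminate | contradiction]. Qed.

Lemma restrict_extend {X Y : Type} (P : X -> Prop) (f : KlHom {x | ~ P x} Y) :
  restrict (fun x => ~ P x) (extend P f) = f.
Proof.
  apply kl_hom_ext. intros [x nx] u. simpl. unfold extend_rel. split.
  - intros [[p _] | [nx' H]]; [contradiction |].
    rewrite (proof_irrelevance _ nx nx'). exact H.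
  - intro H. right. exists nx. exact H.
Qed.

Lemma extend_restrict {X Y : Type} (P : X -> Prop) (g : KlHom X Y) :
  (forall x, P x -> box g (fun _ => False) x) ->
  extend P (restrict (fun x => ~ P x) g) = g.
Proof.
  intro Hg. apply kl_hom_ext. intros x u. simpl. unfold extend_rel. simpl. split.
  - intros [[p ->] | [_ H]]; [| exact H].
    destruct (proj2_sig g x) as [[y|] Hy]; [contradiction (Hg x p y Hy) | exact Hy].
  - intro H. destruct (classic (P x)) as [p | nx].
    + left. split; [exact p |].
      destruct u as [y|]; [contradiction (Hg x p y H) | reflexivity].
    + right. exists nx. exact H.
Qed.

Lemma extend_comp {X Y Z : Type} (P : X -> Prop) (k : KlHom Y Z) (f : KlHom {x | ~ P x} Y) :
  extend P (kl_comp k f) = kl_comp k (extend P f).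
Proof.
  apply kl_hom_ext. intros x u. simpl. unfold extend_rel, kl_comp_rel. simpl. split.
  - intros [[p ->] | [nx [[y [Hy Hk]] | [-> Hx]]]].
    + right. split; [reflexivity |]. left. auto.
    + left. exists y. split; [| exact Hk]. right. exists nx. exact Hy.
    + right. split; [reflexivity |]. right. exists nx. exact Hx.
  - intros [[y [[[_ E] | [nx Hy]] Hk]] | [-> [[p _] | [nx Hx]]]].
    + discriminate.
    + right. exists nx. left. exists y. auto.
    + left. auto.
    + right. exists nx. right. auto.
Qed.

Lemma extend_comp_collapse {W X Y : Type} (P' : W -> Prop) (P : X -> Prop)
    (f : KlHom {x | ~ P x} Y) (h : KlHom W X) :
  (forall w, P' w -> box h P w) ->
  extend P' (kl_comp f (collapse P (restrict (fun w => ~ P' w) h)))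
  = kl_comp (extend P f) h.
Proof.
  intro Hh. apply kl_hom_ext. intros w u. simpl. unfold extend_rel, kl_comp_rel. simpl. split.
  - intros [[p' ->] | [nw [[x [Hx Hf]] | [-> Hw]]]].
    + destruct (collapse_None_of_box P h w (Hh w p')) as [Hw | [x [p Hx]]].
      * right. auto.
      * left. exists x. split; [exact Hx |]. left. auto.
    + left. exists (proj1_sig x). split; [exact Hx |]. right. exists (proj2_sig x).
      destruct x. exact Hf.
    + destruct Hw as [Hw | [x [p Hx]]].
      * right. auto.
      * left. exists x. split; [exact Hx |]. left. auto.
  - intro H. destruct (classic (P' w)) as [p' | nw].
    + left. split; [exact p' |].
      destruct H as [[x [Hx [[_ E] | [nx _]]]] | [E _]]; [exact E | | exact E].
      contradiction (nx (Hh w p' x Hx)).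
    + right. exists nw.
      destruct H as [[x [Hx [[p ->] | [nx Hf]]]] | [-> Hw]].
      * right. split; [reflexivity |]. right. exists x. auto.
      * left. exists (exist _ x nx). auto.
      * right. split; [reflexivity |]. left. exact Hw.
Qed.

Lemma quo_zero_adjunction : Adjunction QuoFun ZeroFun.
Proof.
  apply (adjunction_intro QuoFun ZeroFun
           (fun c d (f : hom KlCat (fob QuoFun c) d) =>
              exist (fun k => forall x, pred c x -> box k (fun _ => False) x)
                (extend (pred c) f) (box_extend (pred c) f))
           (fun c d (g : hom IntCat c (fob ZeroFun d)) =>
              restrict (fun x => ~ pred c x) (proj1_sig g))).
  - intros c d f. apply restrict_extend.
  - intros c d g. apply int_hom_eq, extend_restrict, (proj2_sig g).
  - intros c c' d h f. apply int_hom_eq, extend_comp_collapse, (proj2_sig h).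
  - intros c d d' k f. apply int_hom_eq, extend_comp.
Qed.

Theorem proposition3p3 :
  Adjunction ZeroFun UFun /\
  Adjunction UFun OneFun /\
  (exists Cmp : Functor IntCat KlCat,
      (forall A : ob IntCat, fob Cmp A = ({ x : carrier A | pred A x } : ob KlCat)) /\
      Adjunction OneFun Cmp) /\
  (exists Quo : Functor IntCat KlCat,
      (forall A : ob IntCat, fob Quo A = ({ x : carrier A | ~ pred A x } : ob KlCat)) /\
      Adjunction Quo ZeroFun).
Proof.
  split; [exact zero_U_adjunction |].
  split; [exact U_one_adjunction |].
  split.
  - exists CmpFun. split; [reflexivity | exact one_cmp_adjunction].
  - exists QuoFun. split; [reflexivity | exact quo_zero_adjunction].
Qed.
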